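(* Let $m\ge4$. If $\mathcal W_1$ is an $m\times m$ quadrilateral labyrinth set in $Q$, then for every $n\ge1$ the set $\mathcal W_n$ of white quadrilaterals of order $n$ is an $m^n\times m^n$ quadrilateral labyrinth set. That is, $\mathcal W_n\subseteq\mathcal S_{m^n}$ and $\mathcal W_n$ satisfies the tree property, the exit property and the corner property with $m$ replaced by $m^n$.
   Context: Let $Q$ be a convex quadrilateral in $\mathbb{R}^2$. Divide $Q$ into two triangles by its shorter diagonal (either diagonal if they have equal length). Label the vertices $Q_1,Q_2,Q_3,Q_4$ anticlockwise, starting at an endpoint of that diagonal, so that the diagonal is $Q_1Q_3$. Let $\Delta_1$ be the closed triangle $Q_1Q_2Q_3$ and $\Delta_2$ the closed triangle $Q_3Q_4Q_1$. Every $x\in Q$ has a unique representation $x=\sum_{i=1}^4\alpha_iQ_i$, defined as follows. If $x\in\Delta_1$, then $\alpha_4=0$ and $(\alpha_1,\alpha_2,\alpha_3)$ are the barycentric coordinates of $x$ in $\Delta_1$. If $x\in\Delta_2$, then $\alpha_2=0$ and $(\alpha_1,\alpha_3,\alpha_4)$ are the barycentric coordinates of $x$ in $\Delta_2$. For an ordered quadruple $V=(V_1,\dots,V_4)$ define $P_V:Q\to\mathbb{R}^2$ by $P_V(x)=\sum_i\alpha_iV_i$. For an integer $m\ge2$, define the following index sets: - $A_1=\{(k_1,k_2,k_3,0)\in\mathbb{Z}_{\ge0}^4:k_1+k_2+k_3=m-1,\ k_2\ne0\}$, - $A_2=\{(k_1,0,k_3,k_4)\in\mathbb{Z}_{\ge0}^4:k_1+k_3+k_4=m-1,\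 k_4\ne0\}$, - $A_3=\{(k_1,0,k_3,0)\in\mathbb{Z}_{\ge0}^4:k_1+k_3=m-1\}$, - $A=A_1\cup A_2\cup A_3$. For $k\in A$, let $S_m(k)$ be the quadrilateral with ordered vertices $R_1R_2R_3R_4$ given below. - If $k\in A_1$: $R_1=\frac{(k_1+1)Q_1+k_2Q_2+k_3Q_3}{m}$, $R_2=\frac{k_1Q_1+(k_2+1)Q_2+k_3Q_3}{m}$, $R_3=\frac{k_1Q_1+k_2Q_2+(k_3+1)Q_3}{m}$, $R_4=\frac{(k_1+1)Q_1+(k_2-1)Q_2+(k_3+1)Q_3}{m}$. - If $k\in A_2$: $R_1=\frac{(k_1+1)Q_1+k_3Q_3+k_4Q_4}{m}$, $R_2=\frac{(k_1+1)Q_1+(k_3+1)Q_3+(k_4-1)Q_4}{m}$, $R_3=\frac{k_1Q_1+(k_3+1)Q_3+k_4Q_4}{m}$, $R_4=\frac{k_1Q_1+k_3Q_3+(k_4+1)Q_4}{m}$. - If $k\in A_3$: $R_1=\frac{(k_1+1)Q_1+k_3Q_3}{m}$, $R_2=\frac{k_1Q_1+Q_2+k_3Q_3}{m}$, $R_3=\frac{k_1Q_1+(k_3+1)Q_3}{m}$, $R_4=\frac{k_1Q_1+k_3Q_3+Q_4}{m}$. Let $\mathcal S_m=\{S_m(k):k\in A\}$. For $\mathcal W\subseteq\mathcal S_m$, the graph $\mathcal G(\mathcal W)$ has vertex set $\mathcal W$, with two elements adjacent iff they have a common side. An $m\times m$ quadrilateral labyrinth set ($m\ge4$) is a set $\mathcal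 W_1\subseteq\mathcal S_m$ satisfying three properties. (1) Tree property: $\mathcal G(\mathcal W_1)$ is a tree. (2) Exit property: there is exactly one $(k_1,k_2,0,0)\in A$ with $S_m(k_1,k_2,0,0)\in\mathcal W_1$ and $S_m(0,0,k_2,k_1)\in\mathcal W_1$. There is also exactly one $(k_1,0,0,k_4)\in A$ with $S_m(k_1,0,0,k_4)\in\mathcal W_1$ and $S_m(0,k_1,k_4,0)\in\mathcal W_1$. (3) Corner property: $\mathcal W_1$ contains at most one element of $\{S_m(m-1,0,0,0),S_m(0,0,m-1,0)\}$ and at most one element of $\{S_m(0,m-1,0,0),S_m(0,0,0,m-1)\}$. Given $\mathcal W_1\subseteq\mathcal S_m$ (the white quadrilaterals of order 1), define recursively for $n\ge2$: $\mathcal W_n=\{P_{W}(W'):W'\in\mathcal W_1,\ W\in\mathcal W_{n-1}\}$. Here $P_W(W')$ is the quadrilateral whose ordered vertices are the images under $P_W$ of the ordered vertices of $W'$. Each $W\in\mathcal W_{n-1}$ is used with its ordered vertices. *)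

From mathcomp Require Import all_boot all_order all_algebra.
Set Implicit Arguments. Unset Strict Implicit. Unset Printing Implicit Defensive.
Import Order.TTheory GRing.Theory Num.Theory.
Local Open Scope ring_scope.

Section Defs.
Variable R : realFieldType.

Definition pt : Type := (R * R)%type.
Definition quad : Type := (pt * pt * pt * pt)%type.

Definition padd (p q : pt) : pt := (p.1 + q.1, p.2 + q.2).
Definition psub (p q : pt) : pt := (p.1 - q.1, p.2 - q.2).
Definition pscale (a : R) (p : pt) : pt := (a * p.1, a * p.2).
Definition det2 (u v : pt) : R := u.1 * v.2 - u.2 * v.1.
Definition sqdist (p q : pt) : R := (p.1 - q.1) ^+ 2 + (p.2 - q.2) ^+ 2.

Definition convex_acw (Q : quad) : Prop :=
  let '(q1, q2, q3, q4) := Q in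
  [/\ 0 < det2 (psub q2 q1) (psub q3 q1), 0 < det2 (psub q3 q2) (psub q4 q2),
      0 < det2 (psub q4 q3) (psub q1 q3) & 0 < det2 (psub q1 q4) (psub q2 q4)].

Definition shorter_diag13 (Q : quad) : Prop :=
  let '(q1, q2, q3, q4) := Q in sqdist q1 q3 <= sqdist q2 q4.

Definition comb4 (Q : quad) (a b c d : R) : pt :=
  let '(q1, q2, q3, q4) := Q in
  padd (padd (pscale a q1) (pscale b q2)) (padd (pscale c q3) (pscale d q4)).

Definition bary (A B C x : pt) : R * R * R :=
  let D := det2 (psub B A) (psub C A) in
  (det2 (psub B x) (psub C x) / D, det2 (psub C x) (psub A x) / D,
   det2 (psub A x) (psub B x) / D).

(* P_V(x) = sum_i alpha_i V_i, with alpha the unique representation of x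
   (barycentric in Delta1 = Q1Q2Q3 if x lies in it, else in Delta2 = Q3Q4Q1).
   Only meaningful for x in Q. *)
Definition Pmap (Q V : quad) (x : pt) : pt :=
  let '(q1, q2, q3, q4) := Q in
  let '(v1, v2, v3, v4) := V in
  let '(a1, a2, a3) := bary q1 q2 q3 x in
  if [&& 0 <= a1, 0 <= a2 & 0 <= a3] then
    padd (padd (pscale a1 v1) (pscale a2 v2)) (pscale a3 v3)
  else
    let '(b1, b3, b4) := bary q1 q3 q4 x in
    padd (padd (pscale b1 v1) (pscale b3 v3)) (pscale b4 v4).

Definition Pquad (Q V W : quad) : quad :=
  let '(w1, w2, w3, w4) := W in
  (Pmap Q V w1, Pmap Q V w2, Pmap Q V w3, Pmap Q V w4).

Definition inA1 (m : nat) (k : nat * nat * nat * nat) : bool :=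
  let '(k1, k2, k3, k4) := k in [&& k4 == 0%N, (k1 + k2 + k3 == m.-1)%N & k2 != 0%N].
Definition inA2 (m : nat) (k : nat * nat * nat * nat) : bool :=
  let '(k1, k2, k3, k4) := k in [&& k2 == 0%N, (k1 + k3 + k4 == m.-1)%N & k4 != 0%N].
Definition inA3 (m : nat) (k : nat * nat * nat * nat) : bool :=
  let '(k1, k2, k3, k4) := k in [&& k2 == 0%N, k4 == 0%N & (k1 + k3 == m.-1)%N].
Definition inA (m : nat) (k : nat * nat * nat * nat) : bool :=
  [|| inA1 m k, inA2 m k | inA3 m k].

(* S_m(k) with its ordered vertices R1 R2 R3 R4 (meaningful for k in A) *)
Definition Sm (Q : quad) (m : nat) (k : nat * nat * nat * nat) : quad :=
  let '(k1, k2, k3, k4) := k in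
  let c (a b c d : nat) := pscale (m%:R)^-1 (comb4 Q a%:R b%:R c%:R d%:R) in
  if inA1 m k then
    (c k1.+1 k2 k3 0%N, c k1 k2.+1 k3 0%N, c k1 k2 k3.+1 0%N, c k1.+1 k2.-1 k3.+1 0%N)
  else if inA2 m k then
    (c k1.+1 0%N k3 k4, c k1.+1 0%N k3.+1 k4.-1, c k1 0%N k3.+1 k4, c k1 0%N k3 k4.+1)
  else
    (c k1.+1 0%N k3 0%N, c k1 1%N k3 0%N, c k1 0%N k3.+1 0%N, c k1 0%N k3 1%N).

Definition inSm (Q : quad) (m : nat) (q : quad) : Prop :=
  exists2 k, inA m k & q = Sm Q m k.

Definition sides (q : quad) : seq (pt * pt) :=
  let '(r1, r2, r3, r4) := q in [:: (r1, r2); (r2, r3); (r3, r4); (r4, r1)].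
Definition same_seg (s t : pt * pt) : bool :=
  ((s.1 == t.1) && (s.2 == t.2)) || ((s.1 == t.2) && (s.2 == t.1)).
Definition adj (q q' : quad) : bool :=
  (q != q') && has (fun s => has (same_seg s) (sides q')) (sides q).

Definition tree_prop (W : quad -> Prop) : Prop :=
  (forall x y, W x -> W y ->
     exists s : seq quad, [/\ (forall z, z \in s -> W z), path adj x s & last x s = y])
  /\
  ~ (exists (x : quad) (s : seq quad),
       [/\ W x, (forall z, z \in s -> W z), (2 <= size s)%N, uniq (x :: s)
          & path adj x s && adj (last x s) x]).

Definition exit_prop (Q : quad) (m : nat) (W : quad -> Prop) : Prop :=
  (exists! k : nat * nat,
     [/\ inA m (k.1, k.2, 0%N, 0%N), W (Sm Q m (k.1, k.2, 0%N, 0%N))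
       & W (Sm Q m (0%N, 0%N, k.2, k.1))])
  /\
  (exists! k : nat * nat,
     [/\ inA m (k.1, 0%N, 0%N, k.2), W (Sm Q m (k.1, 0%N, 0%N, k.2))
       & W (Sm Q m (0%N, k.1, k.2, 0%N))]).

Definition corner_prop (Q : quad) (m : nat) (W : quad -> Prop) : Prop :=
  ~ (W (Sm Q m (m.-1, 0%N, 0%N, 0%N)) /\ W (Sm Q m (0%N, 0%N, m.-1, 0%N)))
  /\ ~ (W (Sm Q m (0%N, m.-1, 0%N, 0%N)) /\ W (Sm Q m (0%N, 0%N, 0%N, m.-1))).

Definition labyrinth (Q : quad) (m : nat) (W : quad -> Prop) : Prop :=
  [/\ (4 <= m)%N, (forall q, W q -> inSm Q m q), tree_prop W,
      exit_prop Q m W & corner_prop Q m W].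

(* W_n, the white quadrilaterals of order n (n >= 1); W_0 is unused *)
Fixpoint Wn (Q : quad) (W1 : quad -> Prop) (n : nat) : quad -> Prop :=
  match n with
  | 0 => W1
  | 1 => W1
  | S n' => fun q => exists W W', [/\ Wn Q W1 n' W, W1 W' & q = Pquad Q W W']
  end.

End Defs.

(* Under the chart that maps the unit square onto Q affinely on either side of
   its diagonal, S_N becomes the grid of N x N unit cells and P_{S_M(s)} sends
   cell t of the m x m grid to cell s m + t of the Mm x Mm grid.  So W_n is the
   grid labyrinth obtained by substituting a copy of W_1 into every white cell
   of W_(n-1), and it suffices to check that substitution preserves the three
   properties.  Adjacent copies are joined by exactly one edge, namely the one
   through their facing exits, which is unique by the exit property.  The
   result is connected; and every edge is a bridge: a path avoiding an edge
   inside a copy can only leave the copy through a bridge of W_(n-1), so it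
   returns through the same edge and projects to a path inside the copy,
   while a path avoiding an edge between copies projects to a path of copies
   avoiding the corresponding edge of W_(n-1).  Exits and corners of the big
   grid are those of the copies of W_1 placed in the exit and corner cells of
   W_(n-1). *)

From mathcomp Require Import all_boot all_order all_algebra.
From mathcomp Require Import zify ring lra.
Import Order.TTheory GRing.Theory Num.Theory.
Set Implicit Arguments. Unset Strict Implicit. Unset Printing Implicit Defensive.

Section Trees.
Variable T : eqType.
Implicit Types (e : rel T) (W : T -> Prop).

Definition connected_in e W := forall x y, W x -> W y ->
  exists s : seq T, [/\ (forall z, z \in s -> W z), path e x s & last x s = y].

Definition acyclic_in e W :=
  ~ (exists (x : T) (s : seq T),
       [/\ W x, (forall z, z \in s -> W z), (2 <= size s)%N, uniq (x :: s)
          & path e x s && e (last x s) x]).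

Definition upair_eq (u v x y : T) := ((x == u) && (y == v)) || ((x == v) && (y == u)).

Definition avoid_edge e u v : rel T := fun x y => e x y && ~~ upair_eq u v x y.

Definition bridges_in e W := forall u v, W u -> W v -> e u v ->
  ~ exists s, [/\ (forall z, z \in s -> W z), path (avoid_edge e u v) u s & last u s = v].

Lemma avoid_edge_sub e u v : subrel (avoid_edge e u v) e.
Proof. by move=> x y /andP[]. Qed.

Lemma sub_path_on (e e' : rel T) (A : T -> Prop) x s :
  (forall a b, A a -> A b -> e a b -> e' a b) ->
  A x -> (forall z, z \in s -> A z) -> path e x s -> path e' x s.
Proof.
move=> ee'; elim: s x => [|y s IH] x Ax As //= /andP[exy ps].
have Ay : A y by apply: As; rewrite inE eqxx.
by rewrite ee' //= IH // => z zs; apply: As; rewrite inE zs orbT.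
Qed.

Lemma mem_last_on W x s : W x -> (forall z, z \in s -> W z) -> W (last x s).
Proof. by move=> Wx Ws; move: (mem_last x s); rewrite inE => /orP[/eqP->|/Ws]. Qed.

Lemma acyclic_bridges e W : symmetric e -> irreflexive e ->
  acyclic_in e W -> bridges_in e W.
Proof.
move=> esym eirr Hac u v Wu Wv euv [s [Ws ps ls]].
case: (shortenP ps) ls => s' ps' us' sub ls'.
apply: Hac; exists u, s'; split => //.
- by move=> z /sub /Ws.
- case: s' ps' us' sub ls' => [|y [|z s'']] //=.
  + by move=> _ _ _ uv; rewrite -uv eirr in euv.
  + by move=> + _ _ yv; rewrite -yv /= /avoid_edge /upair_eq !eqxx /= andbF.
- by rewrite (sub_path (@avoid_edge_sub e u v) ps') ls' esym.
Qed.

Lemma path_avoid_edge e u v x s : x != u -> u \notin s ->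
  path e x s -> path (avoid_edge e u v) x s.
Proof.
elim: s x => [|y s IH] x //= xu; rewrite !inE negb_or => /andP[uy us].
case/andP=> exy ps; rewrite /avoid_edge /upair_eq exy (negbTE xu).
by rewrite [y == u]eq_sym (negbTE uy) andbF /= IH // eq_sym.
Qed.

(* A cycle x, y, z, ..., w, x yields the path y, z, ..., w from x to w
   that avoids the edge {x, w}. *)
Lemma bridges_acyclic e W : symmetric e -> bridges_in e W -> acyclic_in e W.
Proof.
move=> esym Hb [x [s [Wx Ws ss us /andP[ps el]]]].
case: s ss us ps el Ws => [|y [|z s]] //= _.
rewrite !inE !negb_or => /andP[/andP[xy /andP[xz xs]] /andP[/andP[yz ys] us]].
case/andP=> exy /andP[eyz ps] el Ws.
have Ww : W (last z s) by apply: Ws; rewrite (in_cons y) mem_last orbT.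
have xw : x != last z s.
  by apply/eqP => eq_w; move: (mem_last z s); rewrite -eq_w inE (negbTE xz) (negbTE xs).
have yw : y != last z s.
  by apply/eqP => eq_w; move: (mem_last z s); rewrite -eq_w inE (negbTE yz) (negbTE ys).
apply: (Hb x (last z s)) => //; first by rewrite esym.
exists [:: y, z & s]; split => //=.
have pyz : path (avoid_edge e x (last z s)) y (z :: s).
  by apply: path_avoid_edge; rewrite 1?eq_sym //= ?inE ?negb_or ?xz ?eyz.
by move: pyz => /= ->; rewrite andbT /avoid_edge /upair_eq exy eqxx (negbTE yw) (negbTE xw).
Qed.

End Trees.

Section Substitution.
Variables (T1 T2 : eqType) (ec : rel T1) (ei : rel T2).
Variable glue : T1 -> T1 -> T2 -> T2 -> bool.
Variables (C : T1 -> Prop) (P : T2 -> Prop).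
Hypotheses (ec_sym : symmetric ec) (ec_irr : irreflexive ec).
Hypotheses (ei_sym : symmetric ei) (ei_irr : irreflexive ei).
Hypothesis glue_sym : forall B B' t t', glue B B' t t' = glue B' B t' t.
Hypotheses (C_conn : connected_in ec C) (C_acyc : acyclic_in ec C).
Hypotheses (P_conn : connected_in ei P) (P_acyc : acyclic_in ei P).
Hypothesis glue_uniq : forall B B' t t' u u', ec B B' -> P t -> P t' -> P u -> P u' ->
  glue B B' t t' -> glue B B' u u' -> t = u /\ t' = u'.
Hypothesis glue_ex : forall B B', C B -> C B' -> ec B B' ->
  exists t t', [/\ P t, P t' & glue B B' t t'].

(* Every block B with C B is a copy of the graph P; two adjacent blocks are
   joined by the single edge selected by [glue]. *)
Definition subst_rel : rel (T1 * T2) := fun x y =>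
  ((x.1 == y.1) && ei x.2 y.2) || (ec x.1 y.1 && glue x.1 y.1 x.2 y.2).
Definition subst_dom (x : T1 * T2) := C x.1 /\ P x.2.

Lemma subst_rel_sym : symmetric subst_rel.
Proof. by move=> x y; rewrite /subst_rel eq_sym ei_sym ec_sym glue_sym. Qed.

Lemma subst_rel_inner a b : a.1 = b.1 -> subst_rel a b -> ei a.2 b.2.
Proof. by move=> eab; rewrite /subst_rel eab eqxx ec_irr /= orbF. Qed.

Lemma subst_rel_cross a b : a.1 != b.1 -> subst_rel a b ->
  ec a.1 b.1 && glue a.1 b.1 a.2 b.2.
Proof. by move=> nab; rewrite /subst_rel (negbTE nab). Qed.

Lemma path_block B t s : path ei t s -> path subst_rel (B, t) (map (pair B) s).
Proof.
elim: s t => [|a s IH] t //= /andP[eta ps].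
by rewrite IH // andbT /subst_rel /= eqxx eta.
Qed.

Lemma subst_connected : connected_in subst_rel subst_dom.
Proof.
move=> [B a] [B' b] [/= CB Pa] [/= CB' Pb].
case: (C_conn CB CB') => cs [Ccs pcs <-] {CB'}.
elim: cs B a CB Pa Ccs pcs => [|c cs IH] B a CB Pa Ccs pcs /=.
  case: (P_conn Pa Pb) => s [Ps ps ls].
  exists (map (pair B) s); split; rewrite ?path_block ?last_map ?ls //.
  by move=> z /mapP[w ws ->]; split => //; apply: Ps.
have Cc : C c by apply: Ccs; rewrite inE eqxx.
case/andP: pcs => eBc pcs.
case: (glue_ex CB Cc eBc) => a0 [a1 [Pa0 Pa1 glue_a]].
case: (P_conn Pa Pa0) => s1 [Ps1 ps1 ls1].
case: (IH c a1) => // [z zs|s2 [Ds2 ps2 ls2]]; first by apply: Ccs; rewrite inE zs orbT.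
exists (map (pair B) s1 ++ (c, a1) :: s2); split.
- move=> z; rewrite mem_cat inE => /orP[/mapP[w ws ->]|/orP[/eqP->|/Ds2]] //.
  by split => //; apply: Ps1.
- rewrite cat_path path_block //= last_map ls1 ps2 andbT.
  by rewrite /subst_rel /= eBc glue_a orbT.
- by rewrite last_cat.
Qed.

Let C_bridges := acyclic_bridges ec_sym ec_irr C_acyc.
Let P_bridges := acyclic_bridges ei_sym ei_irr P_acyc.

Definition subst_rel_off B1 B0 : rel (T1 * T2) := fun a b =>
  subst_rel a b && ~~ upair_eq B1 B0 a.1 b.1.

Lemma project_off_path B1 B0 x s : subst_dom x -> (forall z, z \in s -> subst_dom z) ->
  path (subst_rel_off B1 B0) x s ->
  exists cs, [/\ forall c, c \in cs -> C c, path (avoid_edge ec B1 B0) x.1 cs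
                & last x.1 cs = (last x s).1].
Proof.
elim: s x => [|y s IH] x Dx Ds /=; first by exists [::].
case/andP=> /andP[exy off] ps.
have Dy : subst_dom y by apply: Ds; rewrite inE eqxx.
case: (IH y) => // [z zs|cs [Ccs pcs lcs]]; first by apply: Ds; rewrite inE zs orbT.
have [xy|xy] := eqVneq x.1 y.1; first by exists cs; rewrite xy.
exists (y.1 :: cs); split => //=.
- by move=> c; rewrite inE => /orP[/eqP->|/Ccs] //; case: Dy.
- by case/andP: (subst_rel_cross xy exy) => ecxy _; rewrite pcs /avoid_edge ecxy off.
Qed.

Lemma pair_eq (a u : T1 * T2) : a.1 = u.1 -> a.2 = u.2 -> a = u.
Proof. by case: a; case: u => ? ? ? ? /= -> ->. Qed.

(* Leaving a block through the edge {x, y} and coming back to it, one must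
   re-enter at x: any other return would give a path of blocks from y.1 to
   x.1 avoiding the bridge {y.1, x.1}. *)
Lemma excursion_returns x y s z :
  subst_dom x -> subst_dom y -> (forall w, w \in s -> subst_dom w) -> subst_dom z ->
  subst_rel x y -> x.1 != y.1 -> path subst_rel y (rcons s z) ->
  all (fun w => w.1 != x.1) (y :: s) -> z.1 = x.1 -> z = x.
Proof.
move=> Dx Dy Ds Dz exy xy; rewrite rcons_path => /andP[ps ewz] out zx.
have Dw : subst_dom (last y s) by apply: mem_last_on.
have wx : (last y s).1 != x.1 by apply: (allP out); apply: mem_last.
case/andP: (subst_rel_cross xy exy) => ecxy glue_xy.
have [wy|wy] := eqVneq (last y s).1 y.1.
  have wz : (last y s).1 != z.1 by rewrite zx.
  case/andP: (subst_rel_cross wz ewz); rewrite wy zx => ecyx glue_wz.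
  have glue_yx : glue y.1 x.1 y.2 x.2 by rewrite glue_sym.
  by case: (glue_uniq ecyx Dw.2 Dz.2 Dy.2 Dx.2 glue_wz glue_yx) => _; apply: pair_eq.
exfalso; apply: (C_bridges Dy.1 Dx.1); first by rewrite ec_sym.
have off : path (subst_rel_off y.1 x.1) y (rcons s z).
  rewrite rcons_path; apply/andP; split.
    apply: (sub_path_on (A := fun a => a.1 != x.1)) ps => //.
    - move=> a b ax bx eab; rewrite /subst_rel_off /upair_eq eab.
      by rewrite (negbTE ax) (negbTE bx) !andbF.
    - by case/andP: out.
    - by move=> w ws; apply: (allP out); rewrite inE ws orbT.
  by rewrite /subst_rel_off /upair_eq ewz (negbTE wx) (negbTE wy).
case: (project_off_path Dy _ off) => [w|cs [Ccs pcs lcs]].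
  by rewrite mem_rcons inE => /orP[/eqP->|/Ds].
by exists cs; rewrite lcs last_rcons.
Qed.

Lemma project_block_path u v s x : u.1 = v.1 -> subst_dom x -> x.1 = u.1 ->
  (forall z, z \in s -> subst_dom z) -> path (avoid_edge subst_rel u v) x s ->
  (last x s).1 = u.1 ->
  exists s', [/\ forall z, z \in s' -> P z, path (avoid_edge ei u.2 v.2) x.2 s'
                & last x.2 s' = (last x s).2].
Proof.
move=> uv; have [n] := ubnP (size s); elim: n s x => // n IH [|y s] x /= sn Dx xu Ds.
  by exists [::].
case/andP=> axy ps ls.
have Dy : subst_dom y by apply: Ds; rewrite inE eqxx.
have Ds' z : z \in s -> subst_dom z by move=> zs; apply: Ds; rewrite inE zs orbT.
have [yu|yu] := eqVneq y.1 u.1.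
  case: (IH s y) => // s' [Ps' ps' ls'].
  exists (y.2 :: s'); split => //=.
  - by move=> z; rewrite inE => /orP[/eqP->|/Ps'] //; case: Dy.
  - case/andP: axy => exy nxy; rewrite ps' andbT /avoid_edge.
    rewrite (subst_rel_inner _ exy) ?xu ?yu //=; apply: contra nxy.
    case/orP=> /andP[/eqP x2 /eqP y2]; rewrite /upair_eq.
    + by rewrite (pair_eq xu x2) (pair_eq (etrans yu uv) y2) !eqxx.
    + by rewrite (pair_eq (etrans xu uv) x2) (pair_eq yu y2) !eqxx orbT.
have hs : has (fun w => w.1 == u.1) s.
  case: s {sn Ds Ds' ps} ls => [/= /eqP|a s ls]; first by rewrite (negbTE yu).
  by apply/hasP; exists (last a s); rewrite ?mem_last // ls.
case: (split_find hs) ps ls Ds' sn => z s2 s3 zu s2u ps ls Ds' sn.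
move: ps; rewrite cat_path => /andP[ps2 ps3].
have zx : z = x.
  case/andP: axy => exy _.
  apply: (excursion_returns (s := s2) Dx Dy _ _ exy).
  - by move=> w ws; apply: Ds'; rewrite mem_cat mem_rcons inE ws orbT.
  - by apply: Ds'; rewrite mem_cat mem_rcons mem_head.
  - by rewrite xu eq_sym.
  - by apply: (sub_path (@avoid_edge_sub _ subst_rel u v)).
  - by rewrite /= xu yu /= all_predC.
  - by rewrite xu (eqP zu).
move: ps3 ls; rewrite last_cat !last_rcons zx => ps3 ls.
case: (IH s3 x) => // [|w ws|s' [Ps' ps' ls']].
- move: sn; rewrite size_cat size_rcons addSn !ltnS => /ltnW; exact: leq_ltn_trans (leq_addl _ _).
- by apply: Ds'; rewrite mem_cat ws orbT.
by exists s'; rewrite ls'.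
Qed.

Lemma crossing_uniq u v a b :
  subst_dom u -> subst_dom v -> subst_dom a -> subst_dom b ->
  subst_rel u v -> subst_rel a b -> u.1 != v.1 -> upair_eq u.1 v.1 a.1 b.1 ->
  upair_eq u v a b.
Proof.
move=> Du Dv Da Db euv eab uv; case/andP: (subst_rel_cross uv euv) => ecuv glue_uv.
case/orP=> /andP[/eqP a1 /eqP b1].
- have ab : a.1 != b.1 by rewrite a1 b1.
  case/andP: (subst_rel_cross ab eab); rewrite a1 b1 => _ glue_ab.
  case: (glue_uniq ecuv Da.2 Db.2 Du.2 Dv.2 glue_ab glue_uv) => a2 b2.
  by rewrite /upair_eq (pair_eq a1 a2) (pair_eq b1 b2) !eqxx.
- have ab : a.1 != b.1 by rewrite a1 b1 eq_sym.
  case/andP: (subst_rel_cross ab eab); rewrite a1 b1 glue_sym => _ glue_ba.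
  case: (glue_uniq ecuv Db.2 Da.2 Du.2 Dv.2 glue_ba glue_uv) => b2 a2.
  by rewrite /upair_eq (pair_eq a1 a2) (pair_eq b1 b2) !eqxx orbT.
Qed.

Lemma subst_bridges : bridges_in subst_rel subst_dom.
Proof.
move=> u v Du Dv euv [s [Ds ps ls]].
have [uv|uv] := eqVneq u.1 v.1.
  case: (project_block_path uv Du erefl Ds ps) => [|s' [Ps' ps' ls']]; first by rewrite ls.
  apply: (P_bridges Du.2 Dv.2 (subst_rel_inner uv euv)).
  by exists s'; rewrite ls' ls.
case/andP: (subst_rel_cross uv euv) => ecuv _.
apply: (C_bridges Du.1 Dv.1 ecuv).
have off : path (subst_rel_off u.1 v.1) u s.
  apply: (sub_path_on (A := subst_dom)) ps => // a b Da Db /andP[eab nab].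
  by rewrite /subst_rel_off eab; apply: contra nab; apply: crossing_uniq.
by case: (project_off_path Du Ds off) => cs [Ccs pcs lcs]; exists cs; rewrite lcs ls.
Qed.

Lemma subst_tree : connected_in subst_rel subst_dom /\ acyclic_in subst_rel subst_dom.
Proof.
by split; [exact: subst_connected | exact: bridges_acyclic subst_rel_sym subst_bridges].
Qed.

End Substitution.

Section Image.
Variables (T1 T2 : eqType) (e1 : rel T1) (e2 : rel T2).
Variables (P : T1 -> Prop) (W : T2 -> Prop) (f : T1 -> T2).
Hypothesis W_image : forall q, W q <-> exists2 p, P p & q = f p.
Hypothesis f_inj : forall p p', P p -> P p' -> f p = f p' -> p = p'.
Hypothesis f_rel : forall p p', P p -> P p' -> e2 (f p) (f p') = e1 p p'.

Lemma preimage_seq s : (forall z, z \in s -> W z) ->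
  exists2 s', (forall z, z \in s' -> P z) & s = map f s'.
Proof.
elim: s => [|a s IH] Ws; first by exists [::].
case: IH => [z zs|s' Ps' ->]; first by apply: Ws; rewrite inE zs orbT.
case: (W_image a).1 => [|p Pp ->]; first by apply: Ws; rewrite mem_head.
by exists (p :: s') => // z; rewrite inE => /orP[/eqP->|/Ps'].
Qed.

Lemma path_image x s : P x -> (forall z, z \in s -> P z) ->
  path e2 (f x) (map f s) = path e1 x s.
Proof.
elim: s x => [|y s IH] x Px Ps //=.
have Py : P y by apply: Ps; rewrite mem_head.
by rewrite f_rel // IH // => z zs; apply: Ps; rewrite inE zs orbT.
Qed.

Lemma uniq_image x s : P x -> (forall z, z \in s -> P z) ->
  uniq (f x :: map f s) = uniq (x :: s).
Proof.
move=> Px Ps; rewrite -map_cons map_inj_in_uniq // => a b.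
by rewrite !inE => /orP[/eqP->|/Ps Pa] /orP[/eqP->|/Ps Pb]; apply: f_inj.
Qed.

Lemma connected_image : connected_in e1 P <-> connected_in e2 W.
Proof.
split=> conn.
  move=> x y /W_image[p Pp ->] /W_image[p' Pp' ->].
  case: (conn _ _ Pp Pp') => s [Ps ps <-].
  exists (map f s); split; rewrite ?path_image ?last_map //.
  by move=> z /mapP[w ws ->]; apply/W_image; exists w => //; apply: Ps.
move=> p p' Pp Pp'.
have [Wp Wp'] : W (f p) /\ W (f p') by split; apply/W_image; [exists p | exists p'].
case: (conn _ _ Wp Wp') => s [Ws ps ls].
case: (preimage_seq Ws) => s' Ps' es; subst s.
exists s'; split; rewrite -?path_image //.
by apply: f_inj (mem_last_on Pp Ps') Pp' _; rewrite -last_map.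
Qed.

Lemma acyclic_image : acyclic_in e1 P <-> acyclic_in e2 W.
Proof.
split=> acyc [x [s [Wx Ws ss us /andP[ps el]]]]; apply: acyc.
  case: (W_image x).1 => // p Pp ex; subst x.
  case: (preimage_seq Ws) => s' Ps' es; subst s.
  have Pl := mem_last_on Pp Ps'.
  exists p, s'; split => //.
  - by rewrite size_map in ss.
  - by rewrite -(uniq_image Pp Ps').
  - by rewrite -(path_image Pp Ps') ps -(f_rel Pl Pp) -last_map.
exists (f x), (map f s); split; rewrite ?size_map ?uniq_image ?path_image ?ps //=.
- by apply/W_image; exists x.
- by move=> z /mapP[w ws ->]; apply/W_image; exists w => //; apply: Ws.
- by rewrite last_map f_rel //; apply: mem_last_on.
Qed.

End Image.

Definition in_grid (N : nat) (p : nat * nat) := (p.1 < N) && (p.2 < N).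

Definition grid_adj : rel (nat * nat) := fun p p' =>
  ((p.1 == p'.1) && ((p.2.+1 == p'.2) || (p'.2.+1 == p.2))) ||
  ((p.2 == p'.2) && ((p.1.+1 == p'.1) || (p'.1.+1 == p.1))).

(* Two adjacent m x m blocks are joined through the pair of facing cells
   t, t' on their common border. *)
Definition grid_glue (m : nat) (B B' t t' : nat * nat) : bool :=
  [|| (B.1.+1 == B'.1) && (t.2 == t'.2) && (t.1 == m.-1) && (t'.1 == 0),
      (B'.1.+1 == B.1) && (t.2 == t'.2) && (t'.1 == m.-1) && (t.1 == 0),
      (B.2.+1 == B'.2) && (t.1 == t'.1) && (t.2 == m.-1) && (t'.2 == 0) |
      (B'.2.+1 == B.2) && (t.1 == t'.1) && (t'.2 == m.-1) && (t.2 == 0)].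

(* Cell t of block B in a grid of m x m blocks. *)
Definition grid_join (m : nat) (x : (nat * nat) * (nat * nat)) : nat * nat :=
  (x.1.1 * m + x.2.1, x.1.2 * m + x.2.2).

Lemma grid_adj_sym : symmetric grid_adj.
Proof. by move=> [a b] [c d]; rewrite /grid_adj /=; lia. Qed.

Lemma grid_adj_irr : irreflexive grid_adj.
Proof. by move=> [a b]; rewrite /grid_adj /=; lia. Qed.

Lemma grid_glue_sym m B B' t t' : grid_glue m B B' t t' = grid_glue m B' B t' t.
Proof. by rewrite /grid_glue; lia. Qed.

Lemma divmod_blockD m B t : t < m -> (B * m + t) %/ m = B /\ (B * m + t) %% m = t.
Proof.
move=> tm; have m0 : 0 < m by apply: leq_ltn_trans tm.
by rewrite divnMDl // divn_small // addn0 modnMDl modn_small.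
Qed.

Lemma eq_blockD m B B' t t' : t < m -> t' < m ->
  (B * m + t == B' * m + t') = (B == B') && (t == t').
Proof.
move=> tm t'm; apply/eqP/andP => [e|[/eqP-> /eqP->]] //; split; apply/eqP.
- by rewrite -(divmod_blockD B tm).1 e (divmod_blockD B' t'm).1.
- by rewrite -(divmod_blockD B tm).2 e (divmod_blockD B' t'm).2.
Qed.

Lemma eqS_blockD m B B' t t' : t < m -> t' < m ->
  ((B * m + t).+1 == B' * m + t') =
  ((B == B') && (t.+1 == t')) || ((B.+1 == B') && (t == m.-1) && (t' == 0)).
Proof.
move=> tm t'm; have [t1m|mt1] := ltnP t.+1 m.
  have tm1 : (t == m.-1) = false by lia.
  by rewrite -addnS eq_blockD // tm1 andbF orbF.
have [t1t' tm1 m0] : [/\ (t.+1 == t') = false, t == m.-1 & 0 < m] by split; lia.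
have -> : (B * m + t).+1 = B.+1 * m + 0.
  by rewrite mulSn addn0 -addnS (_ : t.+1 = m) 1?addnC //; lia.
by rewrite eq_blockD // t1t' tm1 andbF andbT [0 == _]eq_sym.
Qed.

Lemma nat_neighbour_cases (a b : nat) :
 [\/ [/\ a == b, b == a, (a.+1 == b) = false & (b.+1 == a) = false],
     [/\ (a == b) = false, (b == a) = false, a.+1 == b & (b.+1 == a) = false],
     [/\ (a == b) = false, (b == a) = false, (a.+1 == b) = false & b.+1 == a] |
     [/\ (a == b) = false, (b == a) = false, (a.+1 == b) = false & (b.+1 == a) = false]].
Proof.
case: (ltngtP a b) => h.
- by case: (eqVneq a.+1 b) => h2; [apply: Or42 | apply: Or44]; split; lia.
- by case: (eqVneq b.+1 a) => h2; [apply: Or43 | apply: Or44]; split; lia.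
- by apply: Or41; split; lia.
Qed.

Lemma grid_adj_join m x y : in_grid m x.2 -> in_grid m y.2 ->
  grid_adj (grid_join m x) (grid_join m y) = subst_rel grid_adj grid_adj (grid_glue m) x y.
Proof.
case: x y => [[B1 B2] [t1 t2]] [[B1' B2'] [t1' t2']] /andP[/= h1 h2] /andP[/= h1' h2'].
rewrite /grid_adj /grid_join /subst_rel /grid_glue /= !eq_blockD // !eqS_blockD //.
rewrite xpair_eqE /=.
case: (nat_neighbour_cases B1 B1') => -[-> -> -> ->];
  case: (nat_neighbour_cases B2 B2') => -[-> -> -> ->];
  rewrite /= ?andbF ?andbT ?orbF ?orbT //=; lia.
Qed.

Lemma grid_join_inj m x y : in_grid m x.2 -> in_grid m y.2 ->
  grid_join m x = grid_join m y -> x = y.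
Proof.
case: x y => [[B1 B2] [t1 t2]] [[B1' B2'] [t1' t2']] /andP[/= h1 h2] /andP[/= h1' h2'].
by case=> /eqP; rewrite eq_blockD // => /andP[/eqP-> /eqP->] /eqP;
  rewrite eq_blockD // => /andP[/eqP-> /eqP->].
Qed.

Definition unit_sides (p : nat * nat) : seq ((nat * nat) * (nat * nat)) :=
  [:: ((p.1, p.2), (p.1.+1, p.2)); ((p.1.+1, p.2), (p.1.+1, p.2.+1));
      ((p.1.+1, p.2.+1), (p.1, p.2.+1)); ((p.1, p.2.+1), (p.1, p.2))].

Definition seg_eq (T : eqType) (s t : T * T) : bool :=
  ((s.1 == t.1) && (s.2 == t.2)) || ((s.1 == t.2) && (s.2 == t.1)).

Lemma grid_adj_sides p p' :
  (p != p') && has (fun s => has (seg_eq s) (unit_sides p')) (unit_sides p) = grid_adj p p'.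
Proof.
case: p p' => [i j] [i' j']; apply/idP/idP.
  case/andP=> neq /hasP[s sin /hasP[s' s'in ns]].
  move: neq sin s'in ns; rewrite xpair_eqE !inE => neq.
  by move=> /or4P[] /eqP -> /or4P[] /eqP ->; rewrite /seg_eq /grid_adj /= !xpair_eqE; lia.
rewrite /grid_adj /= => /orP[] /andP[/eqP e /orP[] /eqP f]; subst;
  rewrite xpair_eqE /seg_eq /= !eqxx /= ?orbT /=; apply/andP; split; lia.
Qed.

Definition grid_subst (m : nat) (C P : nat * nat -> Prop) (p : nat * nat) :=
  exists2 x, subst_dom C P x & p = grid_join m x.

Lemma grid_substE m C P p : 0 < m -> (forall t, P t -> in_grid m t) ->
  grid_subst m C P p <-> C (p.1 %/ m, p.2 %/ m) /\ P (p.1 %% m, p.2 %% m).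
Proof.
move=> m0 P_grid; split.
  case=> [[[B1 B2] [t1 t2]] [/= CB Pt] ->] /=.
  case/andP: (P_grid _ Pt) => /= h1 h2.
  by case: (divmod_blockD B1 h1) => -> ->; case: (divmod_blockD B2 h2) => -> ->.
case=> CB Pt; exists ((p.1 %/ m, p.2 %/ m), (p.1 %% m, p.2 %% m)) => //.
by rewrite /grid_join /= -!divn_eq; case: p {CB Pt}.
Qed.

Lemma grid_glue_cases m B B' t t' : grid_adj B B' -> grid_glue m B B' t t' ->
 [\/ [/\ B'.1 = B.1.+1, B'.2 = B.2, t.1 = m.-1, t'.1 = 0 & t'.2 = t.2],
     [/\ B.1 = B'.1.+1, B'.2 = B.2, t.1 = 0, t'.1 = m.-1 & t'.2 = t.2],
     [/\ B'.2 = B.2.+1, B'.1 = B.1, t.2 = m.-1, t'.2 = 0 & t'.1 = t.1] |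
     [/\ B.2 = B'.2.+1, B'.1 = B.1, t.2 = 0, t'.2 = m.-1 & t'.1 = t.1]].
Proof.
case: B B' t t' => [b1 b2] [b1' b2'] [a1 a2] [a1' a2']; rewrite /grid_adj /grid_glue /= => g.
case/or4P => /andP[/andP[/andP[/eqP h1 /eqP h2] /eqP h3] /eqP h4].
- by apply: Or41; split => //; lia.
- by apply: Or42; split => //; lia.
- by apply: Or43; split => //; lia.
- by apply: Or44; split => //; lia.
Qed.

Lemma exists_unique_eq (T : Type) (A : T -> Prop) i i' :
  (exists! k, A k) -> A i -> A i' -> i = i'.
Proof. by case=> k [_ Ak] Ai Ai'; rewrite -(Ak _ Ai) -(Ak _ Ai'). Qed.

Section GridSubst.
Variables (m : nat) (C P : nat * nat -> Prop).
Hypothesis m0 : 0 < m.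
Hypothesis P_grid : forall t, P t -> in_grid m t.
Hypotheses (C_conn : connected_in grid_adj C) (C_acyc : acyclic_in grid_adj C).
Hypotheses (P_conn : connected_in grid_adj P) (P_acyc : acyclic_in grid_adj P).
Hypothesis P_exit_vert : exists! i, P (i, 0) /\ P (i, m.-1).
Hypothesis P_exit_horiz : exists! j, P (0, j) /\ P (m.-1, j).

Lemma grid_glue_uniq B B' t t' u u' : grid_adj B B' -> P t -> P t' -> P u -> P u' ->
  grid_glue m B B' t t' -> grid_glue m B B' u u' -> t = u /\ t' = u'.
Proof.
case: t t' u u' => [a1 a2] [a1' a2'] [c1 c2] [c1' c2'] g Pt Pt' Pu Pu' gt gu.
case: (grid_glue_cases g gt) => /= -[e1 e2 e3 e4 e5];
  case: (grid_glue_cases g gu) => /= -[f1 f2 f3 f4 f5];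
  try (exfalso; move: g; rewrite /grid_adj; lia); subst.
- by rewrite (exists_unique_eq P_exit_horiz (conj Pt' Pt) (conj Pu' Pu)).
- by rewrite (exists_unique_eq P_exit_horiz (conj Pt Pt') (conj Pu Pu')).
- by rewrite (exists_unique_eq P_exit_vert (conj Pt' Pt) (conj Pu' Pu)).
- by rewrite (exists_unique_eq P_exit_vert (conj Pt Pt') (conj Pu Pu')).
Qed.

Lemma grid_glue_ex B B' : C B -> C B' -> grid_adj B B' ->
  exists t t', [/\ P t, P t' & grid_glue m B B' t t'].
Proof.
move=> _ _; case: B B' => [b1 b2] [b1' b2']; rewrite /grid_adj /grid_glue /=.
case: P_exit_vert => i [[Pi0 Pi1] _]; case: P_exit_horiz => j [[P0j P1j] _].
case/orP=> /andP[/eqP e /orP[/eqP f|/eqP f]]; subst.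
- by exists (i, m.-1), (i, 0); split => //=; rewrite !eqxx /= !orbT.
- by exists (i, 0), (i, m.-1); split => //=; rewrite !eqxx /= !orbT.
- by exists (m.-1, j), (0, j); split => //=; rewrite !eqxx.
- by exists (0, j), (m.-1, j); split => //=; rewrite !eqxx /= orbT.
Qed.

Lemma grid_subst_tree :
  connected_in grid_adj (grid_subst m C P) /\ acyclic_in grid_adj (grid_subst m C P).
Proof.
have [conn acyc] := subst_tree grid_adj_sym grid_adj_irr grid_adj_sym grid_adj_irr
  (@grid_glue_sym m) C_conn C_acyc P_conn P_acyc grid_glue_uniq grid_glue_ex.
have join_inj p p' : subst_dom C P p -> subst_dom C P p' ->
    grid_join m p = grid_join m p' -> p = p'.
  by move=> [_ /P_grid h] [_ /P_grid h']; apply: grid_join_inj.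
have join_adj p p' : subst_dom C P p -> subst_dom C P p' ->
    grid_adj (grid_join m p) (grid_join m p') = subst_rel grid_adj grid_adj (grid_glue m) p p'.
  by move=> [_ /P_grid h] [_ /P_grid h']; apply: grid_adj_join.
split; [exact/(connected_image _ join_inj join_adj) | exact/(acyclic_image _ join_inj join_adj)].
Qed.

End GridSubst.

Definition grid_labyrinth (N : nat) (P : nat * nat -> Prop) :=
  [/\ (forall p, P p -> in_grid N p), connected_in grid_adj P, acyclic_in grid_adj P,
      (exists! i, P (i, 0) /\ P (i, N.-1)) /\ (exists! j, P (0, j) /\ P (N.-1, j))
    & ~ (P (0, 0) /\ P (N.-1, N.-1)) /\ ~ (P (N.-1, 0) /\ P (0, N.-1))].

Lemma exists_unique_blockD m (A B G : nat -> Prop) : 0 < m -> (forall i, B i -> i < m) ->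
  (forall n, G n <-> A (n %/ m) /\ B (n %% m)) ->
  (exists! I, A I) -> (exists! i, B i) -> exists! n, G n.
Proof.
move=> m0 B_lt GE [I [AI I_uniq]] [i [Bi i_uniq]]; have im := B_lt _ Bi.
exists (I * m + i); split; first by apply/GE; case: (divmod_blockD I im) => -> ->.
move=> n /GE[An Bn].
by rewrite (divn_eq n m) -(I_uniq _ An) -(i_uniq _ Bn).
Qed.

Lemma grid_labyrinth_subst M m C P : 0 < M -> 0 < m ->
  grid_labyrinth M C -> grid_labyrinth m P -> grid_labyrinth (M * m) (grid_subst m C P).
Proof.
move=> M0 m0 [C_grid C_conn C_acyc [C_vert C_horiz] [C_c1 C_c2]]
  [P_grid P_conn P_acyc [P_vert P_horiz] [P_c1 P_c2]].
have GE := grid_substE C _ m0 P_grid.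
have [dL mL] : (M * m).-1 %/ m = M.-1 /\ (M * m).-1 %% m = m.-1.
  have -> : (M * m).-1 = M.-1 * m + m.-1 by rewrite -(prednK M0) -(prednK m0) /=; nia.
  by apply: divmod_blockD; rewrite ltn_predL.
have [d0 md0] : 0 %/ m = 0 /\ 0 %% m = 0 by rewrite div0n mod0n.
have [conn acyc] := grid_subst_tree m0 P_grid C_conn C_acyc P_conn P_acyc P_vert P_horiz.
have B_lt i j : P (i, j) -> i < m /\ j < m by move/P_grid/andP.
split => //.
- by move=> p /GE[/C_grid/andP[/= h1 h2] _]; rewrite /in_grid -!ltn_divLR ?h1.
- split.
    apply: (exists_unique_blockD m0 _ _ C_vert P_vert) => [i [/B_lt[]] //|n].
    by rewrite !GE /= dL mL d0 md0; tauto.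
  apply: (exists_unique_blockD m0 _ _ C_horiz P_horiz) => [j [/B_lt[]] //|n].
  by rewrite !GE /= dL mL d0 md0; tauto.
- by rewrite !GE /= dL mL d0 md0; split; [move: P_c1 | move: P_c2]; tauto.
Qed.

Fixpoint grid_iter (m : nat) (P : nat * nat -> Prop) (n : nat) : nat * nat -> Prop :=
  match n with
  | 0 => P
  | 1 => P
  | S n' => grid_subst m (grid_iter m P n') P
  end.

Lemma grid_labyrinth_iter m P n : 0 < m -> grid_labyrinth m P -> 0 < n ->
  grid_labyrinth (m ^ n) (grid_iter m P n).
Proof.
move=> m0 lab; elim: n => [|[|n] IH] // _.
by rewrite expnSr; apply: grid_labyrinth_subst => //; [rewrite expn_gt0 m0 | exact: IH].
Qed.

Lemma unique_antidiagonal N (A : nat * nat -> Prop) (B : nat -> Prop) :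
  (forall k, A k <-> k.1 + k.2 = N.-1 /\ B k.2) -> (forall i, B i -> i <= N.-1) ->
  (exists! k, A k) <-> (exists! i, B i).
Proof.
move=> AE B_le; split.
  case=> k [/AE[sum Bk] k_uniq]; exists k.2; split => // i Bi.
  have Ai : A (N.-1 - i, i) by apply/AE; split => //=; have := B_le _ Bi; lia.
  by rewrite (k_uniq _ Ai).
case=> i [Bi i_uniq]; exists (N.-1 - i, i); split.
  by apply/AE; split => //=; have := B_le _ Bi; lia.
by case=> k1 k2 /AE[/= sum /i_uniq k2i]; subst k2; congr pair; lia.
Qed.

Local Open Scope ring_scope.

Section Chart.
Variable R : realFieldType.
Variables q1 q2 q3 q4 : pt R.
Let Q : quad R := (q1, q2, q3, q4).
Let D1 := det2 (psub q2 q1) (psub q3 q1).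
Let D2 := det2 (psub q3 q1) (psub q4 q1).
Hypothesis D1_gt0 : 0 < D1.
Hypothesis D2_gt0 : 0 < D2.

Definition comb3 (a b c : R) (p1 p2 p3 : pt R) : pt R :=
  padd (padd (pscale a p1) (pscale b p2)) (pscale c p3).

Definition lower_pt (x y : R) : pt R := comb3 (1 - x) (x - y) y q1 q2 q3.
Definition upper_pt (x y : R) : pt R := comb3 (1 - y) x (y - x) q1 q3 q4.

(* Maps the unit square onto Q, affinely on each side of its diagonal, with
   corners (0,0), (1,0), (1,1), (0,1) going to Q1, Q2, Q3, Q4. *)
Definition chart (x y : R) : pt R := if y <= x then lower_pt x y else upper_pt x y.

Lemma bary_lower x y : bary q1 q2 q3 (lower_pt x y) = (1 - x, x - y, y).
Proof.
have := lt0r_neq0 D1_gt0; rewrite /D1 /bary /lower_pt /comb3 /det2 /psub /padd /pscale /=.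
by move=> D1n; congr (_, _, _); field.
Qed.

Lemma bary_upper x y : bary q1 q3 q4 (upper_pt x y) = (1 - y, x, y - x).
Proof.
have := lt0r_neq0 D2_gt0; rewrite /D2 /bary /upper_pt /comb3 /det2 /psub /padd /pscale /=.
by move=> D2n; congr (_, _, _); field.
Qed.

Lemma bary_upper_q2 x y : (bary q1 q2 q3 (upper_pt x y)).1.2 = (x - y) * (D2 / D1).
Proof.
have := lt0r_neq0 D1_gt0.
by rewrite /D1 /D2 /bary /upper_pt /comb3 /det2 /psub /padd /pscale /= => D1n; field.
Qed.

Lemma chart_lower x y : y <= x -> chart x y = lower_pt x y.
Proof. by rewrite /chart => ->. Qed.

Lemma chart_upper x y : x <= y -> chart x y = upper_pt x y.
Proof.
rewrite /chart; case: ifP => // yx xy.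
have -> : y = x by apply/eqP; rewrite eq_le yx xy.
by rewrite /lower_pt /upper_pt /comb3 /padd /pscale /=; congr pair; ring.
Qed.

Lemma chart_inj x y x' y' : chart x y = chart x' y' -> x = x' /\ y = y'.
Proof.
have r_gt0 : 0 < D2 / D1 by apply: divr_gt0.
rewrite /chart; case: ifP => h; case: ifP => h' e.
- by move: (congr1 (bary q1 q2 q3) e); rewrite !bary_lower => -[ex _ ->]; split; lra.
- have : (bary q1 q2 q3 (lower_pt x y)).1.2 = (bary q1 q2 q3 (upper_pt x' y')).1.2.
    by rewrite e.
  rewrite bary_lower bary_upper_q2 /=; move/negbT: h'; rewrite -ltNge; nra.
- have : (bary q1 q2 q3 (upper_pt x y)).1.2 = (bary q1 q2 q3 (lower_pt x' y')).1.2.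
    by rewrite e.
  rewrite bary_lower bary_upper_q2 /=; move/negbT: h; rewrite -ltNge; nra.
- by move: (congr1 (bary q1 q3 q4) e); rewrite !bary_upper => -[ey ex _]; split; lra.
Qed.

Lemma Pmap_lower (V : quad R) x y : 0 <= y -> y <= x -> x <= 1 ->
  Pmap Q V (lower_pt x y) = comb3 (1 - x) (x - y) y V.1.1.1 V.1.1.2 V.1.2.
Proof.
move=> y0 yx x1; rewrite /Pmap /Q bary_lower.
by case: V => [[[v1 v2] v3] v4] /=; rewrite ifT //; apply/and3P; split; lra.
Qed.

Lemma Pmap_upper (V : quad R) x y : 0 <= x -> x < y -> y <= 1 ->
  Pmap Q V (upper_pt x y) = comb3 (1 - y) x (y - x) V.1.1.1 V.1.2 V.2.
Proof.
move=> x0 xy y1; rewrite /Pmap /Q bary_upper.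
have := bary_upper_q2 x y; case: (bary q1 q2 q3 (upper_pt x y)) => [[a1 a2] a3] /= ->.
have D_gt0 : 0 < D2 / D1 by apply: divr_gt0.
case: V => [[[v1 v2] v3] v4] /=.
by rewrite ifF //; apply/negbTE; rewrite !negb_and -!ltNge; apply/orP; right; apply/orP; left; nra.
Qed.

Lemma comb3_lower a b c x1 y1 x2 y2 x3 y3 : a + b + c = 1 ->
  comb3 a b c (lower_pt x1 y1) (lower_pt x2 y2) (lower_pt x3 y3) =
  lower_pt (a * x1 + b * x2 + c * x3) (a * y1 + b * y2 + c * y3).
Proof.
move=> abc; have -> : c = 1 - a - b by rewrite -abc; ring.
by rewrite /lower_pt /comb3 /padd /pscale /=; congr pair; ring.
Qed.

Lemma comb3_upper a b c x1 y1 x2 y2 x3 y3 : a + b + c = 1 ->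
  comb3 a b c (upper_pt x1 y1) (upper_pt x2 y2) (upper_pt x3 y3) =
  upper_pt (a * x1 + b * x2 + c * x3) (a * y1 + b * y2 + c * y3).
Proof.
move=> abc; have -> : c = 1 - a - b by rewrite -abc; ring.
by rewrite /upper_pt /comb3 /padd /pscale /=; congr pair; ring.
Qed.

Definition chart_square (M r1 r2 : R) : quad R :=
  (chart (r1 / M) (r2 / M), chart ((r1 + 1) / M) (r2 / M),
   chart ((r1 + 1) / M) ((r2 + 1) / M), chart (r1 / M) ((r2 + 1) / M)).

(* The square must not straddle the diagonal, so that [chart] is affine on
   each of its two halves. *)
Lemma Pmap_chart_square M r1 r2 u v : 0 < M ->
  [\/ r1 = r2, r1 + 1 <= r2 | r2 + 1 <= r1] -> 0 <= u <= 1 -> 0 <= v <= 1 ->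
  Pmap Q (chart_square M r1 r2) (chart u v) = chart ((r1 + u) / M) ((r2 + v) / M).
Proof.
move=> M0 r12 /andP[u0 u1] /andP[v0 v1].
have leM a b : (a / M <= b / M) = (a <= b) by rewrite ler_pM2r // invr_gt0.
have Mn : M != 0 by rewrite gt_eqF.
have [vu|uv] := lerP v u.
  rewrite chart_lower // Pmap_lower //=.
  case: r12 => r12.
  - by rewrite !chart_lower ?leM 1?comb3_lower; [congr lower_pt; field | ring | lra..].
  - by rewrite !chart_upper ?leM 1?comb3_upper; [congr upper_pt; field | ring | lra..].
  - by rewrite !chart_lower ?leM 1?comb3_lower; [congr lower_pt; field | ring | lra..].
rewrite chart_upper ?(ltW uv) // Pmap_upper //=.
case: r12 => r12.
- by rewrite !chart_upper ?leM 1?comb3_upper; [congr upper_pt; field | ring | lra..].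
- by rewrite !chart_upper ?leM 1?comb3_upper; [congr upper_pt; field | ring | lra..].
- by rewrite !chart_lower ?leM 1?comb3_lower; [congr lower_pt; field | ring | lra..].
Qed.

Definition grid_pt (N a b : nat) : pt R := chart (a%:R / N%:R) (b%:R / N%:R).

Definition cell (N : nat) (p : nat * nat) : quad R :=
  (grid_pt N p.1 p.2, grid_pt N p.1.+1 p.2, grid_pt N p.1.+1 p.2.+1, grid_pt N p.1 p.2.+1).

Lemma grid_pt_inj N a b a' b' : (0 < N)%N -> grid_pt N a b = grid_pt N a' b' ->
  a = a' /\ b = b'.
Proof.
move=> N0 /chart_inj[ea eb]; have Nn : N%:R != 0 :> R by rewrite pnatr_eq0 -lt0n.
have unscale c c' : c%:R / N%:R = c'%:R / N%:R :> R -> c = c'.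
  by move/(congr1 (fun z => z * N%:R)); rewrite !mulfVK // => /eqP; rewrite eqr_nat => /eqP.
by split; apply: unscale.
Qed.

Lemma cell_inj N p p' : (0 < N)%N -> cell N p = cell N p' -> p = p'.
Proof. by move=> N0; case: p p' => [i j] [i' j'] [/(grid_pt_inj N0) [-> ->]]. Qed.

Lemma adj_cell N p p' : (0 < N)%N -> adj (cell N p) (cell N p') = grid_adj p p'.
Proof.
move=> N0; rewrite -grid_adj_sides /adj.
have -> : (cell N p == cell N p') = (p == p') by apply/eqP/eqP => [/(cell_inj N0)|->].
have pt_eq a b c d : (grid_pt N a b == grid_pt N c d) = ((a, b) == (c, d)).
  by apply/eqP/eqP => [/(grid_pt_inj N0) [-> ->]|[-> ->]].
congr (_ && _); case: p p' => [i j] [i' j'].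
by rewrite /sides /cell /unit_sides /= /same_seg /seg_eq /= !pt_eq.
Qed.

Lemma cell_chart_square N s : cell N s = chart_square N%:R s.1%:R s.2%:R.
Proof. by rewrite /cell /chart_square /grid_pt -!natr1. Qed.

Lemma Pmap_grid_pt M m s a b : (0 < M)%N -> (0 < m)%N -> (a <= m)%N -> (b <= m)%N ->
  Pmap Q (cell M s) (grid_pt m a b) = grid_pt (M * m) (s.1 * m + a) (s.2 * m + b).
Proof.
move=> M0 m0 am bm.
have Mn : M%:R != 0 :> R by rewrite pnatr_eq0 -lt0n.
have mn : m%:R != 0 :> R by rewrite pnatr_eq0 -lt0n.
have m_gt0 : 0 < m%:R :> R by rewrite ltr0n.
rewrite cell_chart_square /grid_pt Pmap_chart_square ?ltr0n //.
- by rewrite !natrD !natrM; congr chart; field; rewrite Mn mn.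
- case: (ltngtP s.1 s.2) => h; [apply: Or32 | apply: Or33 | apply: Or31];
    by rewrite ?natr1 ?ler_nat ?h.
- by rewrite divr_ge0 ?ler0n //= ler_pdivrMr // mul1r ler_nat.
- by rewrite divr_ge0 ?ler0n //= ler_pdivrMr // mul1r ler_nat.
Qed.

Lemma Pquad_cell M m s t : (0 < M)%N -> (0 < m)%N -> in_grid m t ->
  Pquad Q (cell M s) (cell m t) = cell (M * m) (grid_join m (s, t)).
Proof.
move=> M0 m0 /andP[t1 t2].
rewrite /Pquad [cell m t]/cell [cell (M * m) _]/cell /grid_join; cbv beta iota.
by rewrite !Pmap_grid_pt ?addnS // ltnW.
Qed.

Lemma comb4_lower N a b c i j : (0 < N)%N -> (a + b + c)%N = N -> i = (b + c)%N -> j = c ->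
  pscale (N%:R)^-1 (comb4 Q a%:R b%:R c%:R 0%:R) = grid_pt N i j.
Proof.
move=> N0 abc -> ->.
have Nn : N%:R != 0 :> R by rewrite pnatr_eq0 -lt0n.
have ea : a%:R = N%:R - b%:R - c%:R :> R by rewrite -abc !natrD; ring.
rewrite /grid_pt chart_lower; last by rewrite ler_pM2r ?invr_gt0 ?ltr0n // ler_nat leq_addl.
by rewrite /lower_pt /comb3 /comb4 /Q /padd /pscale /= ea !natrD; congr pair; field.
Qed.

Lemma comb4_upper N a c d i j : (0 < N)%N -> (a + c + d)%N = N -> i = c -> j = (c + d)%N ->
  pscale (N%:R)^-1 (comb4 Q a%:R 0%:R c%:R d%:R) = grid_pt N i j.
Proof.
move=> N0 acd -> ->.
have Nn : N%:R != 0 :> R by rewrite pnatr_eq0 -lt0n.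
have ea : a%:R = N%:R - c%:R - d%:R :> R by rewrite -acd !natrD; ring.
rewrite /grid_pt chart_upper; last by rewrite ler_pM2r ?invr_gt0 ?ltr0n // ler_nat leq_addr.
by rewrite /upper_pt /comb3 /comb4 /Q /padd /pscale /= ea !natrD; congr pair; field.
Qed.

Lemma Sm_cell N k : (0 < N)%N -> inA N k ->
  Sm Q N k = cell N (k.1.1.2 + k.1.2, k.1.2 + k.2)%N.
Proof.
case: k => [[[k1 k2] k3] k4] N0 kA; rewrite /Sm /cell.
case A1: (inA1 N (k1, k2, k3, k4)).
  move: A1 => /and3P[/eqP k40 /eqP sum k2n]; subst k4.
  by congr (_, _, _, _); apply: comb4_lower => //=; lia.
case A2: (inA2 N (k1, k2, k3, k4)).
  move: A2 => /and3P[/eqP k20 /eqP sum k4n]; subst k2.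
  by congr (_, _, _, _); apply: comb4_upper => //=; lia.
move: kA; rewrite /inA A1 A2 => /and3P[/eqP k20 /eqP k40 /eqP sum]; subst k2 k4.
by congr (_, _, _, _); [apply: comb4_lower..| apply: comb4_upper] => //=; lia.
Qed.

Lemma inSm_cell N q : (0 < N)%N -> inSm Q N q <-> exists2 p, in_grid N p & q = cell N p.
Proof.
move=> N0; split.
  case=> -[[[k1 k2] k3] k4] kA ->; exists (k2 + k3, k3 + k4)%N; last exact: Sm_cell.
  by move: kA; rewrite /inA /inA1 /inA2 /inA3 /in_grid /=; lia.
case=> -[i j] /andP[/= iN jN] ->.
have [k kA ->] : exists2 k, inA N k & (i, j) = (k.1.1.2 + k.1.2, k.1.2 + k.2)%N.
  case: (ltngtP j i) => ij; [exists (N.-1 - i, i - j, j, 0)%N | exists (N.-1 - j, 0, i, j - i)%N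
    | exists (N.-1 - i, 0, i, 0)%N]; rewrite /inA /inA1 /inA2 /inA3 /=; try lia; congr pair; lia.
by exists k; rewrite // Sm_cell.
Qed.

Section Cells.
Variables (N : nat) (W : quad R -> Prop) (P : nat * nat -> Prop).
Hypothesis N_gt0 : (0 < N)%N.
Hypothesis P_grid : forall p, P p -> in_grid N p.
Hypothesis W_cells : forall q, W q <-> exists2 p, P p & q = cell N p.

Lemma W_cell p : W (cell N p) <-> P p.
Proof.
split=> [/W_cells[p' Pp' /(cell_inj N_gt0) ->] //|Pp].
by apply/W_cells; exists p.
Qed.

Lemma Sm_exit_vert k1 k2 : (k1 + k2 = N.-1)%N ->
  Sm Q N (k1, k2, 0, 0)%N = cell N (k2, 0)%N /\ Sm Q N (0, 0, k2, k1)%N = cell N (k2, N.-1).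
Proof.
move=> sum; rewrite !Sm_cell /= ?addn0 ?add0n 1?addnC ?sum //.
all: rewrite /inA /inA1 /inA2 /inA3 /=; lia.
Qed.

Lemma Sm_exit_horiz k1 k2 : (k1 + k2 = N.-1)%N ->
  Sm Q N (k1, 0, 0, k2)%N = cell N (0, k2)%N /\ Sm Q N (0, k1, k2, 0)%N = cell N (N.-1, k2).
Proof.
move=> sum; rewrite !Sm_cell /= ?addn0 ?add0n ?sum //.
all: rewrite /inA /inA1 /inA2 /inA3 /=; lia.
Qed.

Lemma exit_vert_cells :
  (exists! k : nat * nat,
     [/\ inA N (k.1, k.2, 0%N, 0%N), W (Sm Q N (k.1, k.2, 0%N, 0%N))
       & W (Sm Q N (0%N, 0%N, k.2, k.1))]) <->
  exists! i, P (i, 0%N) /\ P (i, N.-1).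
Proof.
apply: (@unique_antidiagonal N) => [[k1 k2]|i [/P_grid/andP[/= iN _] _]]; last by lia.
have -> : inA N (k1, k2, 0, 0)%N = (k1 + k2 == N.-1)%N.
  by rewrite /inA /inA1 /inA2 /inA3 /=; lia.
split=> [[/eqP sum]|[sum [P0 P1]]]; have [-> ->] := Sm_exit_vert sum.
  by move=> /W_cell ? /W_cell ?.
by split; [rewrite sum | apply/W_cell..].
Qed.

Lemma exit_horiz_cells :
  (exists! k : nat * nat,
     [/\ inA N (k.1, 0%N, 0%N, k.2), W (Sm Q N (k.1, 0%N, 0%N, k.2))
       & W (Sm Q N (0%N, k.1, k.2, 0%N))]) <->
  exists! j, P (0%N, j) /\ P (N.-1, j).
Proof.
apply: (@unique_antidiagonal N) => [[k1 k2]|j [/P_grid/andP[/= _ jN] _]]; last by lia.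
have -> : inA N (k1, 0, 0, k2)%N = (k1 + k2 == N.-1)%N.
  by rewrite /inA /inA1 /inA2 /inA3 /=; lia.
split=> [[/eqP sum]|[sum [P0 P1]]]; have [-> ->] := Sm_exit_horiz sum.
  by move=> /W_cell ? /W_cell ?.
by split; [rewrite sum | apply/W_cell..].
Qed.

Lemma corner_cells : corner_prop Q N W <->
  ~ (P (0, 0)%N /\ P (N.-1, N.-1)) /\ ~ (P (N.-1, 0%N) /\ P (0%N, N.-1)).
Proof.
rewrite /corner_prop !Sm_cell /= ?addn0 ?add0n ?W_cell //.
all: rewrite /inA /inA1 /inA2 /inA3 /=; lia.
Qed.

Lemma labyrinth_cells : labyrinth Q N W <-> (4 <= N)%N /\ grid_labyrinth N P.
Proof.
have cell_inj p p' : P p -> P p' -> cell N p = cell N p' -> p = p'.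
  by move=> _ _ /(cell_inj N_gt0).
have cell_adj p p' : P p -> P p' -> adj (cell N p) (cell N p') = grid_adj p p'.
  by move=> _ _; apply: adj_cell.
have conn := connected_image W_cells cell_inj cell_adj.
have acyc := acyclic_image W_cells cell_inj cell_adj.
split.
  case=> N4 _ [/conn C_conn /acyc C_acyc] [/exit_vert_cells vert /exit_horiz_cells horiz].
  by move/corner_cells.
case=> N4 [_ /conn C_conn /acyc C_acyc [/exit_vert_cells vert /exit_horiz_cells horiz]].
move/corner_cells => corner; split => //.
by move=> q /W_cells[p /P_grid Pp ->]; apply/(inSm_cell _ N_gt0); exists p.
Qed.

End Cells.

Section Iteration.
Variables (m : nat) (W1 : quad R -> Prop).
Hypothesis m_gt0 : (0 < m)%N.
Hypothesis W1_Sm : forall q, W1 q -> inSm Q m q.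

Definition white_cells (p : nat * nat) := in_grid m p /\ W1 (cell m p).

Lemma W1_cells q : W1 q <-> exists2 p, white_cells p & q = cell m p.
Proof.
split=> [W1q|[p [_ W1p] ->] //].
case/(inSm_cell _ m_gt0): (W1_Sm W1q) => p p_grid q_cell.
by exists p => //; rewrite /white_cells -q_cell.
Qed.

Lemma Wn_cells n : (0 < n)%N -> forall q,
  Wn Q W1 n q <-> exists2 p, grid_iter m white_cells n p & q = cell (m ^ n) p.
Proof.
elim: n => [|[|n] IH] // _; first by rewrite expn1; exact: W1_cells.
have mn_gt0 : (0 < m ^ n.+1)%N by rewrite expn_gt0 m_gt0.
have join_cell s t : white_cells t ->
    Pquad Q (cell (m ^ n.+1) s) (cell m t) = cell (m ^ n.+2) (grid_join m (s, t)).
  by case=> t_grid _; rewrite [(m ^ n.+2)%N]expnSr Pquad_cell.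
move=> q; split.
  case=> V [V' [/(IH isT)[s Gs ->] /W1_cells[t Pt ->] ->]].
  by exists (grid_join m (s, t)); [exists (s, t) | rewrite join_cell].
case=> p [[s t] [Gs Pt] ->] ->.
exists (cell (m ^ n.+1) s), (cell m t).
by split; [apply/(IH isT); exists s | case: Pt | rewrite join_cell].
Qed.

End Iteration.

End Chart.

Theorem proposition3p2 (R : realFieldType) (Q : quad R) (m : nat)
    (W1 : quad R -> Prop) :
  convex_acw Q -> shorter_diag13 Q -> (4 <= m)%N ->
  labyrinth Q m W1 ->
  forall n : nat, (1 <= n)%N -> labyrinth Q (m ^ n) (Wn Q W1 n).
Proof.
(* Only the orientation of Q matters: which diagonal is shorter is irrelevant. *)
case: Q => [[[q1 q2] q3] q4] [D1_gt0 _ D3_gt0 _] _ m4 lab n n_gt0.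
have D2_gt0 : 0 < det2 (psub q3 q1) (psub q4 q1).
  by move: D3_gt0; rewrite /det2 /psub /=; lra.
have m_gt0 : (0 < m)%N by apply: leq_trans m4.
have W1_Sm : forall q, W1 q -> inSm (q1, q2, q3, q4) m q by case: lab.
have white_grid p : white_cells q1 q2 q3 q4 m W1 p -> in_grid m p by case.
have [_ glab] := (labyrinth_cells D1_gt0 D2_gt0 m_gt0 white_grid
  (W1_cells D1_gt0 D2_gt0 m_gt0 W1_Sm)).1 lab.
have [iter_grid _ _ _ _] := grid_labyrinth_iter m_gt0 glab n_gt0.
apply/(labyrinth_cells D1_gt0 D2_gt0 _ iter_grid (Wn_cells D1_gt0 D2_gt0 m_gt0 W1_Sm n_gt0)).
  by rewrite expn_gt0 m_gt0.
split; last exact: grid_labyrinth_iter.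
by apply: leq_trans m4 _; rewrite -{1}(expn1 m) leq_pexp2l.
Qed.
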